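(* Let $\alpha\in(-\infty,0)\cup(0,1)$, $\gamma\in(0,1]$, let $h:\mathbb{R}\to\mathbb{R}$ be continuous with $m\le h\le 1$ for some $m\in(0,1)$, and let $A$ be a continuous, bounded, nonnegative function on $\mathbb{R}$. Define $h_A(x,y)=\frac1\alpha x^\alpha h(y)+\frac1\alpha A(y)x^{\alpha(1-\gamma)}$ for $(x,y)\in\mathbb{R}_+\times\mathbb{R}$. Then for each $y\in\mathbb{R}$, $x\mapsto h_A(x,y)$ is strictly increasing and strictly concave on $\mathbb{R}_+$, with $\frac{\partial}{\partial x}h_A(0+,y)=\infty$ and $\frac{\partial}{\partial x}h_A(\infty,y)=0$. Moreover there exist constants $\vartheta\in(0,1)$ and $\varrho\in(1,\infty)$ such that $\vartheta\frac{\partial}{\partial x}h_A(x,y)\ge\frac{\partial}{\partial x}h_A(\varrho x,y)$ for all $(x,y)\in\mathbb{R}_+\times\mathbb{R}$. Furthermore, if $\alpha\in(0,1)$ there exist constants $\kappa_1\in(0,\infty)$ and $\rho_1\in(0,1)$ such that $0<h_A(x,y)\le\kappa_1(1+x^{\rho_1})$ for all $(x,y)\in\mathbb{R}_+\times\mathbb{R}$; if $\alpha\in(-\infty,0)$ there exist constants $\kappa_2\in(-\infty,0)$ and $\rho_2\in(-\infty,0)$ such that $0>h_A(x,y)\ge\kappa_2(1+x^{\rho_2})$ for all $(x,y)\in\mathbb{R}_+\times\mathbb{R}$. *)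

From Stdlib Require Import Reals.
From Coquelicot Require Import Coquelicot.
Open Scope R_scope.

(* h_A(x,y) = (1/alpha) x^alpha h(y) + (1/alpha) A(y) x^(alpha(1-gamma)),
   for x > 0 (real powers via Rpower, meaningful for x > 0). *)
Definition hA (alpha gamma : R) (h A : R -> R) (x y : R) : R :=
  / alpha * Rpower x alpha * h y + / alpha * A y * Rpower x (alpha * (1 - gamma)).

Definition dxhA (alpha gamma : R) (h A : R -> R) (x y : R) : R :=
  Derive (fun z => hA alpha gamma h A z y) x.

From Stdlib Require Import Reals Lra Psatz.
From Coquelicot Require Import Coquelicot.
Open Scope R_scope.

(* For fixed y, the x-derivative of hA is h(y) x^(alpha-1) + (1-gamma) A(y) x^(alpha(1-gamma)-1),
   a sum of two negative powers of x with a positive and a nonnegative coefficient.  Such a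
   sum is positive and strictly decreasing, blows up at 0+ and vanishes at infinity; by the
   mean value theorem this gives monotonicity, strict concavity and the Inada conditions,
   and replacing x by 2x multiplies each term by at most
   max(2^(alpha-1), 2^(alpha(1-gamma)-1)) < 1.  For the growth bounds, alpha * hA equals
   h x^alpha + A x^(alpha(1-gamma)), which lies in (0, (1+B)(1+x^alpha)] for B bounding A, as
   x^(alpha c) <= 1 + x^alpha for 0 <= c <= 1. *)

Lemma Rpower_pos x e : 0 < Rpower x e.
Proof. apply exp_pos. Qed.

Lemma Rpower_lt_neg e x1 x2 : e < 0 -> 0 < x1 -> x1 < x2 -> Rpower x2 e < Rpower x1 e.
Proof.
  intros He Hx1 Hx12. apply exp_increasing.
  assert (ln x1 < ln x2) by (apply ln_increasing; lra). nra.
Qed.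

Lemma Rpower_lt_1_neg x e : 1 < x -> e < 0 -> Rpower x e < 1.
Proof. intros Hx He. rewrite <- (Rpower_O x) by lra. now apply Rpower_lt. Qed.

Lemma exp_le_compat a b : a <= b -> exp a <= exp b.
Proof. intros [Hab|<-]; [left; now apply exp_increasing|right; reflexivity]. Qed.

Lemma Rpower_mult_le_1_plus x a c : 0 <= c <= 1 -> Rpower x (a * c) <= 1 + Rpower x a.
Proof.
  intros Hc. unfold Rpower.
  pose proof (exp_pos (a * ln x)).
  destruct (Rle_or_lt 0 (a * ln x)).
  - assert (exp (a * c * ln x) <= exp (a * ln x)) by (apply exp_le_compat; nra). lra.
  - assert (exp (a * c * ln x) <= exp 0) by (apply exp_le_compat; nra).
    rewrite exp_0 in *. lra.
Qed.

Lemma Rbar_mult_pos_p_infty c : 0 < c -> Rbar_mult c p_infty = p_infty.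
Proof.
  intros Hc. apply is_Rbar_mult_unique, is_Rbar_mult_sym, is_Rbar_mult_p_infty_pos.
  exact Hc.
Qed.

Lemma Rbar_mult_neg_m_infty e : e < 0 -> Rbar_mult e m_infty = p_infty.
Proof.
  intros He. apply is_Rbar_mult_unique, is_Rbar_mult_sym, is_Rbar_mult_m_infty_neg.
  exact He.
Qed.

Lemma Rbar_mult_neg_p_infty e : e < 0 -> Rbar_mult e p_infty = m_infty.
Proof.
  intros He. apply is_Rbar_mult_unique, is_Rbar_mult_sym, is_Rbar_mult_p_infty_neg.
  exact He.
Qed.

Lemma Rpower_neg_at_right_0 e : e < 0 ->
  filterlim (fun x => Rpower x e) (at_right 0) (Rbar_locally p_infty).
Proof.
  intros He. unfold Rpower.
  apply (filterlim_comp _ _ _ (fun x => e * ln x) exp _ (Rbar_locally p_infty)).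
  - eapply filterlim_comp; [exact is_lim_ln_0|].
    rewrite <- (Rbar_mult_neg_m_infty e He). apply filterlim_Rbar_mult_l.
  - exact is_lim_exp_p.
Qed.

Lemma Rpower_neg_at_p_infty e : e < 0 ->
  filterlim (fun x => Rpower x e) (Rbar_locally p_infty) (Rbar_locally 0).
Proof.
  intros He. unfold Rpower.
  apply (filterlim_comp _ _ _ (fun x => e * ln x) exp _ (Rbar_locally m_infty)).
  - eapply filterlim_comp; [exact is_lim_ln_p|].
    rewrite <- (Rbar_mult_neg_p_infty e He). apply filterlim_Rbar_mult_l.
  - exact is_lim_exp_m.
Qed.

Section DerivativeOnHalfLine.
Variables (a : R) (f f' : R -> R).
Hypothesis Hf : forall x, a < x -> is_derive f x (f' x).

Let mvt x1 x2 : a < x1 -> x1 < x2 ->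
  exists c, f x2 - f x1 = f' c * (x2 - x1) /\ x1 < c < x2.
Proof.
  intros H1 H12. apply MVT_cor2; [exact H12|].
  intros c Hc. apply is_derive_Reals, Hf. lra.
Qed.

Lemma increasing_of_derive_pos :
  (forall x, a < x -> 0 < f' x) ->
  forall x1 x2, a < x1 -> x1 < x2 -> f x1 < f x2.
Proof.
  intros Hpos x1 x2 H1 H12.
  destruct (mvt x1 x2 H1 H12) as [c [E Hc]].
  assert (0 < f' c) by (apply Hpos; lra). nra.
Qed.

Lemma strictly_concave_of_derive_decreasing :
  (forall x1 x2, a < x1 -> x1 < x2 -> f' x2 < f' x1) ->
  forall x1 x2 t, a < x1 -> a < x2 -> x1 <> x2 -> 0 < t < 1 ->
  t * f x1 + (1 - t) * f x2 < f (t * x1 + (1 - t) * x2).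
Proof.
  intros Hdec.
  assert (Hord : forall x1 x2 t, a < x1 -> x1 < x2 -> 0 < t < 1 ->
            t * f x1 + (1 - t) * f x2 < f (t * x1 + (1 - t) * x2)).
  { intros x1 x2 t H1 H12 Ht.
    set (z := t * x1 + (1 - t) * x2).
    destruct (mvt x1 z H1 ltac:(unfold z; nra)) as [c1 [E1 Hc1]].
    destruct (mvt z x2 ltac:(unfold z; nra) ltac:(unfold z; nra)) as [c2 [E2 Hc2]].
    assert (Hlt : f' c2 < f' c1) by (apply Hdec; lra).
    replace (z - x1) with ((1 - t) * (x2 - x1)) in E1 by (unfold z; ring).
    replace (x2 - z) with (t * (x2 - x1)) in E2 by (unfold z; ring).
    (* f z lies above the chord since the slope f' c1 on [x1, z] exceeds f' c2 on [z, x2] *)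
    assert (0 < t * (1 - t) * (x2 - x1) * (f' c1 - f' c2)).
    { repeat apply Rmult_lt_0_compat; lra. }
    nra. }
  intros x1 x2 t H1 H2 H12 Ht.
  destruct (Rlt_or_le x1 x2) as [Hlt|Hle]; [now apply Hord|].
  replace (t * x1 + (1 - t) * x2) with ((1 - t) * x2 + (1 - (1 - t)) * x1) by ring.
  pose proof (Hord x2 x1 (1 - t) H2 ltac:(lra) ltac:(lra)). lra.
Qed.

End DerivativeOnHalfLine.

Definition power_sum (c p d q x : R) : R := c * Rpower x p + d * Rpower x q.

Section PowerSum.
Variables (c p d q : R).
Hypotheses (Hc : 0 < c) (Hd : 0 <= d) (Hp : p < 0) (Hq : q < 0).

Lemma power_sum_pos x : 0 < power_sum c p d q x.
Proof.
  unfold power_sum. pose proof (Rpower_pos x p). pose proof (Rpower_pos x q). nra.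
Qed.

Lemma power_sum_decreasing x1 x2 : 0 < x1 -> x1 < x2 ->
  power_sum c p d q x2 < power_sum c p d q x1.
Proof.
  intros H1 H12. unfold power_sum.
  pose proof (Rpower_lt_neg p x1 x2 Hp H1 H12).
  pose proof (Rpower_lt_neg q x1 x2 Hq H1 H12). nra.
Qed.

Lemma power_sum_at_right_0 :
  filterlim (power_sum c p d q) (at_right 0) (Rbar_locally p_infty).
Proof.
  apply (filterlim_ge_p_infty (fun x => c * Rpower x p)).
  - apply filter_forall. intros x. unfold power_sum.
    pose proof (Rpower_pos x q). nra.
  - eapply filterlim_comp; [exact (Rpower_neg_at_right_0 p Hp)|].
    rewrite <- (Rbar_mult_pos_p_infty c Hc) at 2. apply filterlim_Rbar_mult_l.
Qed.

Lemma power_sum_at_p_infty :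
  filterlim (power_sum c p d q) (Rbar_locally p_infty) (Rbar_locally 0).
Proof.
  replace (Finite 0) with (Finite (c * 0 + d * 0)) by (f_equal; ring).
  apply (is_lim_plus' (fun x => c * Rpower x p) (fun x => d * Rpower x q) p_infty).
  - exact (is_lim_scal_l _ c p_infty 0 (Rpower_neg_at_p_infty p Hp)).
  - exact (is_lim_scal_l _ d p_infty 0 (Rpower_neg_at_p_infty q Hq)).
Qed.

Lemma power_sum_scale_le r x : 0 < r -> 0 < x ->
  power_sum c p d q (r * x) <= Rmax (Rpower r p) (Rpower r q) * power_sum c p d q x.
Proof.
  intros Hr Hx. unfold power_sum. rewrite <- !Rpower_mult_distr by assumption.
  pose proof (Rmax_l (Rpower r p) (Rpower r q)). pose proof (Rpower_pos x p).
  pose proof (Rmax_r (Rpower r p) (Rpower r q)). pose proof (Rpower_pos x q).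
  set (M := Rmax (Rpower r p) (Rpower r q)) in *.
  assert (0 <= (M - Rpower r p) * (c * Rpower x p)) by (apply Rmult_le_pos; nra).
  assert (0 <= (M - Rpower r q) * (d * Rpower x q)) by (apply Rmult_le_pos; nra).
  nra.
Qed.

End PowerSum.

Section HAProperties.
Variables (alpha gamma : R) (h A : R -> R).
Hypotheses (Halpha : alpha < 0 \/ 0 < alpha < 1) (Hgamma : 0 < gamma <= 1)
  (Hh : forall y, 0 < h y <= 1) (HAn : forall y, 0 <= A y).

Definition hA_deriv (y : R) : R -> R :=
  power_sum (h y) (alpha - 1) (A y * (1 - gamma)) (alpha * (1 - gamma) - 1).

Let alpha_neq0 : alpha <> 0.
Proof. lra. Qed.

Let h_pos y : 0 < h y.
Proof. apply Hh. Qed.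

Let A_coef_nonneg y : 0 <= A y * (1 - gamma).
Proof. apply Rmult_le_pos; [apply HAn|lra]. Qed.

Let exponent1_neg : alpha - 1 < 0.
Proof. lra. Qed.

Let exponent2_neg : alpha * (1 - gamma) - 1 < 0.
Proof. destruct Halpha; nra. Qed.

Lemma hA_is_derive y x : 0 < x ->
  is_derive (fun z => hA alpha gamma h A z y) x (hA_deriv y x).
Proof.
  intros Hx.
  pose proof (proj2 (is_derive_Reals _ _ _) (derivable_pt_lim_power x alpha Hx)) as D1.
  pose proof (proj2 (is_derive_Reals _ _ _)
                (derivable_pt_lim_power x (alpha * (1 - gamma)) Hx)) as D2.
  pose proof (is_derive_plus _ _ _ _ _ (is_derive_scal _ _ (/ alpha * h y) _ D1)
                                       (is_derive_scal _ _ (/ alpha * A y) _ D2)) as D.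
  replace (hA_deriv y x) with
    (/ alpha * h y * (alpha * Rpower x (alpha - 1))
     + / alpha * A y * (alpha * (1 - gamma) * Rpower x (alpha * (1 - gamma) - 1))).
  - eapply is_derive_ext; [|exact D]. intros z. unfold hA, plus; simpl. ring.
  - unfold hA_deriv, power_sum. field. exact alpha_neq0.
Qed.

Lemma dxhA_eq y x : 0 < x -> dxhA alpha gamma h A x y = hA_deriv y x.
Proof. intros Hx. apply is_derive_unique, hA_is_derive, Hx. Qed.

Lemma hA_increasing y x1 x2 : 0 < x1 -> x1 < x2 ->
  hA alpha gamma h A x1 y < hA alpha gamma h A x2 y.
Proof.
  apply (increasing_of_derive_pos 0 (fun z => hA alpha gamma h A z y) (hA_deriv y)).
  - intros x Hx. now apply hA_is_derive.
  - intros x _. now apply power_sum_pos.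
Qed.

Lemma hA_strictly_concave y x1 x2 t :
  0 < x1 -> 0 < x2 -> x1 <> x2 -> 0 < t < 1 ->
  t * hA alpha gamma h A x1 y + (1 - t) * hA alpha gamma h A x2 y
  < hA alpha gamma h A (t * x1 + (1 - t) * x2) y.
Proof.
  apply (strictly_concave_of_derive_decreasing 0 (fun z => hA alpha gamma h A z y)
           (hA_deriv y)).
  - intros x Hx. now apply hA_is_derive.
  - intros a b Ha Hab. now apply power_sum_decreasing.
Qed.

Lemma dxhA_at_right_0 y :
  filterlim (fun x => dxhA alpha gamma h A x y) (at_right 0) (Rbar_locally p_infty).
Proof.
  apply (filterlim_ext_loc (hA_deriv y)).
  - exists (mkposreal 1 Rlt_0_1). intros x _ Hx. symmetry. now apply dxhA_eq.
  - now apply power_sum_at_right_0.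
Qed.

Lemma dxhA_at_p_infty y :
  filterlim (fun x => dxhA alpha gamma h A x y) (Rbar_locally p_infty) (Rbar_locally 0).
Proof.
  apply (filterlim_ext_loc (hA_deriv y)).
  - exists 0. intros x Hx. symmetry. now apply dxhA_eq.
  - now apply power_sum_at_p_infty.
Qed.

Lemma dxhA_doubling :
  exists theta rho, 0 < theta < 1 /\ 1 < rho /\
    forall x y, 0 < x ->
      theta * dxhA alpha gamma h A x y >= dxhA alpha gamma h A (rho * x) y.
Proof.
  exists (Rmax (Rpower 2 (alpha - 1)) (Rpower 2 (alpha * (1 - gamma) - 1))), 2.
  split; [split|split; [lra|]].
  - eapply Rlt_le_trans; [apply Rpower_pos|apply Rmax_l].
  - apply Rmax_lub_lt; apply Rpower_lt_1_neg; lra.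
  - intros x y Hx. apply Rle_ge. rewrite !dxhA_eq by lra.
    apply power_sum_scale_le; auto; lra.
Qed.

End HAProperties.

Section GrowthBounds.
Variables (alpha gamma : R) (h A : R -> R).
Hypotheses (Hgamma : 0 < gamma <= 1) (Hh : forall y, 0 < h y <= 1) (HAn : forall y, 0 <= A y).

Lemma hA_factor x y : hA alpha gamma h A x y =
  / alpha * (h y * Rpower x alpha + A y * Rpower x (alpha * (1 - gamma))).
Proof. unfold hA. ring. Qed.

Lemma hA_factor_bounds B x y : (forall y, A y <= B) ->
  0 < h y * Rpower x alpha + A y * Rpower x (alpha * (1 - gamma))
    <= (1 + B) * (1 + Rpower x alpha).
Proof.
  intros HB. pose proof (Hh y). pose proof (HAn y). pose proof (HB y).
  pose proof (Rpower_pos x alpha). pose proof (Rpower_pos x (alpha * (1 - gamma))).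
  pose proof (Rpower_mult_le_1_plus x alpha (1 - gamma) ltac:(lra)).
  split; nra.
Qed.

Lemma hA_bounds_pos B : (forall y, A y <= B) -> 0 < alpha < 1 ->
  exists kappa1 rho1, 0 < kappa1 /\ 0 < rho1 < 1 /\
    forall x y, 0 < x -> 0 < hA alpha gamma h A x y <= kappa1 * (1 + Rpower x rho1).
Proof.
  intros HB Hpos. pose proof (HAn 0). pose proof (HB 0).
  assert (Hinv : 0 < / alpha) by (apply Rinv_0_lt_compat; lra).
  exists ((1 + B) / alpha), alpha.
  split; [apply Rdiv_lt_0_compat; lra|split; [exact Hpos|]].
  intros x y _. rewrite hA_factor. unfold Rdiv.
  destruct (hA_factor_bounds B x y HB). split; nra.
Qed.

Lemma hA_bounds_neg B : (forall y, A y <= B) -> alpha < 0 ->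
  exists kappa2 rho2, kappa2 < 0 /\ rho2 < 0 /\
    forall x y, 0 < x -> kappa2 * (1 + Rpower x rho2) <= hA alpha gamma h A x y < 0.
Proof.
  intros HB Hneg. pose proof (HAn 0). pose proof (HB 0).
  assert (Hinv : / alpha < 0) by (apply Rinv_lt_0_compat; lra).
  exists ((1 + B) / alpha), alpha.
  split; [unfold Rdiv; nra|split; [exact Hneg|]].
  intros x y _. rewrite hA_factor. unfold Rdiv.
  destruct (hA_factor_bounds B x y HB). split; nra.
Qed.

End GrowthBounds.

Theorem lemma3p1 (alpha gamma m : R) (h A : R -> R)
  (Halpha : alpha < 0 \/ (0 < alpha < 1))
  (Hgamma : 0 < gamma <= 1)
  (Hm : 0 < m < 1)
  (Hhc : continuity h)
  (Hhb : forall y, m <= h y <= 1)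
  (HAc : continuity A)
  (HAb : exists B, forall y, A y <= B)
  (HAn : forall y, 0 <= A y) :
  (forall y : R,
     (forall x, 0 < x -> ex_derive (fun z => hA alpha gamma h A z y) x) /\
     (forall x1 x2, 0 < x1 -> x1 < x2 ->
        hA alpha gamma h A x1 y < hA alpha gamma h A x2 y) /\
     (forall x1 x2 t, 0 < x1 -> 0 < x2 -> x1 <> x2 -> 0 < t < 1 ->
        t * hA alpha gamma h A x1 y + (1 - t) * hA alpha gamma h A x2 y
        < hA alpha gamma h A (t * x1 + (1 - t) * x2) y) /\
     filterlim (fun x => dxhA alpha gamma h A x y) (at_right 0) (Rbar_locally p_infty) /\
     filterlim (fun x => dxhA alpha gamma h A x y) (Rbar_locally p_infty) (Rbar_locally 0)) /\
  (exists theta rho, 0 < theta < 1 /\ 1 < rho /\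
     forall x y, 0 < x ->
       theta * dxhA alpha gamma h A x y >= dxhA alpha gamma h A (rho * x) y) /\
  (0 < alpha < 1 ->
     exists kappa1 rho1, 0 < kappa1 /\ 0 < rho1 < 1 /\
       forall x y, 0 < x ->
         0 < hA alpha gamma h A x y <= kappa1 * (1 + Rpower x rho1)) /\
  (alpha < 0 ->
     exists kappa2 rho2, kappa2 < 0 /\ rho2 < 0 /\
       forall x y, 0 < x ->
         kappa2 * (1 + Rpower x rho2) <= hA alpha gamma h A x y < 0).
Proof.
  destruct HAb as [B HB].
  assert (Hh : forall y, 0 < h y <= 1) by (intros y; pose proof (Hhb y); lra).
  split; [|split; [|split]].
  - intros y. repeat split.
    + intros x Hx. eexists. now apply hA_is_derive.
    + intros x1 x2. now apply hA_increasing.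
    + intros x1 x2 t. now apply hA_strictly_concave.
    + now apply dxhA_at_right_0.
    + now apply dxhA_at_p_infty.
  - now apply dxhA_doubling.
  - now apply (hA_bounds_pos alpha gamma h A Hgamma Hh HAn B).
  - now apply (hA_bounds_neg alpha gamma h A Hgamma Hh HAn B).
Qed.
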